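(* Let $k$ be such that $n = k\,2^{(k+9)/2}$ is an integer divisible by $k$. Then, for $k$ sufficiently large, $$T(\mathcal{F}_2^4) < k^3 f(n,k),$$ where $f(n,k) = \binom{k}{3}\left(\frac{n}{k}\right)^{4k-9}2^{-4\binom{k}{2}+9}$.
   Context: Partition the vertex set of $K_n$ into $k$ classes $V_1,\dots,V_k$, each of size $n/k$. Let $X=\{\{v_i,v_j\}: v_i\in V_i,\ v_j\in V_j,\ i\ne j\}$. Let $\mathcal{F}=\{\binom{S}{2}: S\subseteq V_1\cup\dots\cup V_k,\ |S\cap V_i|=1 \text{ for all } i\}$ be the family of edge sets of transversal $k$-cliques. For a family $\mathcal{H}$ of finite sets, $T(\mathcal{H}) = \sum_{H\in\mathcal{H}}2^{-|H|}$. The family of $4$-clusters is $$\mathcal{F}_2^4=\left\{E_1\cup E_2\cup E_3\cup E_4 : \{E_1,\dots,E_4\}\in\binom{\mathcal{F}}{4},\ |E_1\cap E_2\cap E_3\cap E_4|\ge 2\right\},$$ i.e. the set of all unions of $4$ distinct members of $\mathcal{F}$ that share at least two elements of $X$. *)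

From HB Require Import structures.
From mathcomp Require Import all_boot all_order all_algebra.
Set Implicit Arguments. Unset Strict Implicit. Unset Printing Implicit Defensive.
Import Order.TTheory GRing.Theory Num.Theory.

(* Vertex set of K_n partitioned into k classes V_1..V_k of size m = n/k:
   vertex (i, v) lies in class V_i. *)
Definition vtx (k m : nat) := ('I_k * 'I_m)%type.

Definition vclass (k m : nat) (i : 'I_k) : {set vtx k m} :=
  [set x : vtx k m | x.1 == i].

Definition crossEdges (k m : nat) : {set {set vtx k m}} :=
  [set e : {set vtx k m} | [exists x : vtx k m, exists y : vtx k m,
      (x.1 != y.1) && (e == [set x; y])]].

Definition transversal (k m : nat) (S : {set vtx k m}) : bool :=
  [forall i : 'I_k, #|S :&: vclass m i| == 1].

Definition binom2 (k m : nat) (S : {set vtx k m}) : {set {set vtx k m}} :=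
  [set e : {set vtx k m} | (e \subset S) && (#|e| == 2)].

Definition cliqueFam (k m : nat) : {set {set {set vtx k m}}} :=
  [set binom2 S | S in [set S : {set vtx k m} | transversal S]].

(* F_2^4: unions of 4 distinct members of F sharing at least 2 elements of X *)
Definition cluster4 (k m : nat) : {set {set {set vtx k m}}} :=
  [set (\bigcup_(E in Q) E) | Q : {set {set {set vtx k m}}} in
     [set Q : {set {set {set vtx k m}}} |
        [&& Q \subset cliqueFam k m, #|Q| == 4 &
            2 <= #|(\bigcap_(E in Q) E) :&: crossEdges k m|]]].

Definition Tweight (T : finType) (H : {set {set T}}) : rat :=
  (\sum_(A in H) (2%:Q) ^- #|A|)%R.

Definition fnk (n k : nat) : rat :=
  ('C(k, 3)%:R * ((n%:R / k%:R) ^ ((4 * k)%:Z - 9)%R)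
    * (2%:Q) ^ (- (4 * 'C(k, 2))%:Z + 9)%R)%R.

From Pilot Require Import Defs.
From HB Require Import structures.
From mathcomp Require Import all_boot all_order all_algebra.
From mathcomp Require Import zify ring.
Import Order.TTheory GRing.Theory Num.Theory.

Set Implicit Arguments. Unset Strict Implicit. Unset Printing Implicit Defensive.

(* Write m = n/k for the class size.  A transversal k-clique is determined by
   the function f : 'I_k -> 'I_m picking its vertex in each class (its vertex
   set is the graph [vset f] of f).  Four distinct transversal cliques sharing
   two edges share three vertices, so every 4-cluster is the union of the
   cliques of f1, ..., f4 agreeing on a set I of three classes.  Adding the
   cliques one by one, the clique of f_j brings at least 'C(k, 2) new edges
   minus its overlap 'C(|vset f_j ∩ W_j|, 2) with the earlier vertices W_j, so
   2^-|cluster| <= 2^(sum of overlaps) / 2^(4 'C(k, 2)).  Summing over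
   (I, f1, ..., f4), each inner sum of 2^overlap over the f agreeing with f1
   on I is at most B = 16 m^(k-3): group f by the classes outside I where its
   vertex meets the earlier (three-per-class) vertices, and bound the
   resulting binomial series once m = 2^(p+6), k = 2p + 3, p >= 20.  Hence
   T(F_2^4) <= 'C(k, 3) m^k B^3 / 2^(4 'C(k, 2)) = 8 f(n, k) < k^3 f(n, k). *)

Lemma leq_expn2r a b e : a <= b -> a ^ e <= b ^ e.
Proof. by case: e => // e; rewrite leq_exp2r. Qed.

Lemma bin_leq_expn n j : 'C(n, j) <= n ^ j.
Proof.
elim: n j => [|n IH] [|j] //.
rewrite binS; apply: (@leq_trans (n ^ j.+1 + n ^ j)); first exact: leq_add.
rewrite expnS [X in _ <= X]expnS.
have := leq_expn2r j (leqnSn n); nia.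
Qed.

Lemma bin_leq_exp2 n j : 'C(n, j) <= 2 ^ n.
Proof.
elim: n j => [|n IH] [|j] //; first by rewrite expn_gt0.
by rewrite binS expnS mul2n -addnn leq_add.
Qed.

Lemma bin2_double j : 'C(j, 2) * 2 = j * j.-1.
Proof.
elim: j => // j IH; rewrite binS bin1 mulnDl IH; case: j {IH} => //= j; lia.
Qed.

Lemma bin2_add3 j : 'C(3 + j, 2) = 3 + 3 * j + 'C(j, 2).
Proof.
have h1 := bin2_double (3 + j); have h2 := bin2_double j.
rewrite [(3 + j).-1]/= in h1; nia.
Qed.

Lemma double_leq_exp2 p : p.*2 <= 2 ^ p.
Proof.
elim: p => // p IH; rewrite doubleS expnS.
have : 1 <= 2 ^ p by rewrite expn_gt0.
case: p IH => [|p] IH //; have : 2 <= 2 ^ p.+1 by rewrite (@leq_pexp2l 2 1).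
lia.
Qed.

Lemma quartic_leq_exp2 p : 20 <= p -> 144 * p ^ 4 <= 2 ^ (p + 7).
Proof.
move=> hp; rewrite -(subnKC hp); elim: (p - 20) => [|d IH]; first lia.
have h : (20 + d.+1) ^ 4 <= 2 * (20 + d) ^ 4 by nia.
have -> : 20 + d.+1 + 7 = (20 + d + 7).+1 by lia.
rewrite (expnS 2).
move: h IH; generalize ((20 + d.+1) ^ 4) ((20 + d) ^ 4) (2 ^ (20 + d + 7)); lia.
Qed.

(* The j-th term of the inner sum (times the number 2p of such terms) fits
   in the budget 2^(j(p+3)) it gets from m^j = 2^(j(p+6)).  For j <= p, square
   both sides: N C(N,j) 3^j <= (3N^2)^j and 2^(2 C(j,2)) <= 2^((p-1) j), while
   (3N^2)^2 = 144 p^4 <= 2^(p+7).  For p < j, bound N, C(N,j), 3^j by powers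
   of 2 and use concavity of j(p+3) - C(j,2) on [p+1, 2p]. *)
Lemma term_bound_small p j : 20 <= p -> 1 <= j <= p ->
  p.*2 * 'C(p.*2, j) * 3 ^ j * 2 ^ 'C(j, 2) <= 2 ^ (j * (p + 3)).
Proof.
move=> hp /andP[j1 hjp]; set N := p.*2.
have hpow : (N * 'C(N, j) * 3 ^ j) <= (3 * N * N) ^ j.
  have hN : N <= N ^ j by rewrite -{1}(expn1 N) leq_pexp2l //; rewrite /N; lia.
  apply: (@leq_trans ((N ^ j * N ^ j) * 3 ^ j)).
    by rewrite leq_mul2r leq_mul ?orbT // bin_leq_expn.
  rewrite !expnMn; move: (N ^ j) (3 ^ j) => a b; lia.
rewrite -(leq_exp2r _ _ (isT : 0 < 2)).
apply: (@leq_trans (((3 * N * N) ^ 2 * 2 ^ (p - 1)) ^ j)).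
  rewrite expnMn -expnM.
  have -> : ((3 * N * N) ^ 2 * 2 ^ (p - 1)) ^ j = ((3 * N * N) ^ j) ^ 2 * 2 ^ ((p - 1) * j).
    by rewrite expnMn -!expnM (mulnC 2 j) expnM.
  apply: leq_mul; first exact: leq_expn2r.
  rewrite leq_exp2l // bin2_double; case: j j1 hjp {hpow} => // j _ /= hjp; nia.
rewrite -!expnM (_ : j * (p + 3) * 2 = ((p + 7) + (p - 1)) * j); last lia.
rewrite expnM; apply: leq_expn2r; rewrite expnD leq_mul2r; apply/orP; right.
rewrite (_ : (3 * N * N) ^ 2 = 144 * p ^ 4); last by rewrite /N -!mul2n; lia.
exact: quartic_leq_exp2.
Qed.

Lemma term_bound_large p j : 6 <= p -> p < j <= p.*2 ->
  p.*2 * 'C(p.*2, j) * 3 ^ j * 2 ^ 'C(j, 2) <= 2 ^ (j * (p + 3)).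
Proof.
move=> hp /andP[hpj j2].
have h3 : 3 ^ j <= 2 ^ (4 * p).
  apply: (@leq_trans (3 ^ p.*2)); first exact: leq_pexp2l.
  by rewrite -mul2n !expnM; apply: leq_expn2r.
apply: (@leq_trans (2 ^ (7 * p) * 2 ^ 'C(j, 2))).
  apply: leq_mul => //.
  have -> : 7 * p = p + p.*2 + 4 * p by rewrite -mul2n; lia.
  rewrite (expnD 2 (p + p.*2)) (expnD 2 p).
  exact: leq_mul (leq_mul (double_leq_exp2 p) (bin_leq_exp2 _ _)) h3.
rewrite -expnD leq_exp2l //.
have := bin2_double j; have hconc : 0 <= (p.*2 - j) * (j - p.+1) by [].
clear h3; case: j hpj j2 hconc => // j hpj j2 hconc hd; nia.
Qed.

(* The term
   j = 0 equals 8 m^(k-3) and each of the 2p other terms is at most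
   8 m^(k-3) / 2p. *)
Lemma inner_series_bound p : 20 <= p ->
  \sum_(j < (p.*2).+1) 'C(p.*2, j) * (2 ^ 'C(3 + j, 2) * (3 ^ j * (2 ^ (p + 6)) ^ (p.*2 - j)))
    <= 16 * (2 ^ (p + 6)) ^ (p.*2).
Proof.
move=> hp; set N := p.*2; set m := 2 ^ (p + 6).
have term_le : forall j, 1 <= j <= N ->
    N * ('C(N, j) * (2 ^ 'C(3 + j, 2) * (3 ^ j * m ^ (N - j)))) <= 8 * m ^ N.
  move=> j hj; have hjN : j <= N by case/andP: hj.
  have -> : N * ('C(N, j) * (2 ^ 'C(3 + j, 2) * (3 ^ j * m ^ (N - j))))
      = (8 * 2 ^ (3 * j) * m ^ (N - j)) * (N * 'C(N, j) * 3 ^ j * 2 ^ 'C(j, 2)).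
    rewrite bin2_add3 !expnD.
    move: (2 ^ (3 * j)) (2 ^ 'C(j, 2)) (m ^ (N - j)) ('C(N, j)) (3 ^ j) => a b c d e.
    rewrite [2 ^ 3]/=; lia.
  have -> : 8 * m ^ N = (8 * 2 ^ (3 * j) * m ^ (N - j)) * 2 ^ (j * (p + 3)).
    have -> : m ^ N = m ^ j * m ^ (N - j) by rewrite -expnD subnKC.
    have -> : m ^ j = 2 ^ (3 * j) * 2 ^ (j * (p + 3)).
      by rewrite /m -expnM -expnD; congr (2 ^ _); lia.
    move: (2 ^ (3 * j)) (2 ^ (j * (p + 3))) (m ^ (N - j)) => a b c; lia.
  rewrite leq_mul2l; apply/orP; right.
  case: (leqP j p) => hjp.
    by apply: term_bound_small; rewrite ?hjp ?andbT; case/andP: hj.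
  by apply: term_bound_large; rewrite ?hjp ?hjN //; lia.
rewrite big_ord_recl /= bin0 subn0 expn0 !mul1n.
have -> : 2 ^ 'C(3 + 0, 2) * m ^ N = 8 * m ^ N by [].
have hN : 0 < N by rewrite /N; lia.
rewrite -[16]/(8 + 8) mulnDl leq_add2l -(leq_pmul2l hN) big_distrr /=.
apply: (@leq_trans (\sum_(i < N) 8 * m ^ N)); last by rewrite sum_nat_const card_ord.
by apply: leq_sum => i _; apply: term_le; rewrite /bump /=; have := ltn_ord i; lia.
Qed.

Lemma sum_over_subsets (T : finType) (W : {set T}) (h : nat -> nat) :
  \sum_(J : {set T} | J \subset W) h #|J| = \sum_(j < #|W|.+1) 'C(#|W|, j) * h j.
Proof.
rewrite (partition_big (fun J : {set T} => inord #|J| : 'I_#|W|.+1) xpredT) //=.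
apply: eq_bigr => j _.
rewrite (eq_bigr (fun _ => h j)); last first.
  by move=> J /andP [JW /eqP <-]; rewrite inordK // ltnS subset_leq_card.
rewrite sum_nat_cond_const; congr (_ * _).
rewrite -cards_draws; apply: eq_card => J; rewrite !inE.
apply/andP/andP => [[JW /eqP <-]|[JW /eqP jE]]; split => //.
  by rewrite inordK // ltnS subset_leq_card.
by apply/eqP/val_inj; rewrite /= inordK jE // ltn_ord.
Qed.

Lemma subset_of_card (T : finType) (A : {set T}) n :
  n <= #|A| -> exists2 B : {set T}, B \subset A & #|B| = n.
Proof.
move=> /card_geqP [s [us ss sA]]; exists [set x in s].
  by apply/subsetP => x; rewrite inE; apply: sA.
by rewrite cardsE (card_uniqP us).
Qed.

Section TransversalCliques.
Variables k m : nat.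
Local Notation V := (vtx k m).
Local Notation FF := {ffun 'I_k -> 'I_m}.

Definition vset (f : FF) : {set V} := [set x : V | x.2 == f x.1].

Lemma in_vset f i v : ((i, v) \in vset f) = (v == f i).
Proof. by rewrite inE. Qed.

Lemma vsetE f : vset f = [set (i, f i) | i : 'I_k].
Proof.
apply/setP => [[i v]]; rewrite inE /=; apply/eqP/imsetP => [-> | [j _ [-> ->]]] //.
by exists i.
Qed.

Lemma card_vset f : #|vset f| = k.
Proof. by rewrite vsetE card_imset ?card_ord // => i j []. Qed.

Lemma transversal_vset (S : {set V}) : Defs.transversal S -> exists f : FF, S = vset f.
Proof.
move=> /forallP tS.
have pick_vertex i : exists v : 'I_m, (i, v) \in S.
  have /cards1P [x Hx] := tS i.
  have : x \in S :&: vclass m i by rewrite Hx set11.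
  by rewrite !inE => /andP [xS /eqP <-]; exists x.2; rewrite -surjective_pairing.
have [g Hg] := fin_all_exists pick_vertex; exists [ffun i => g i].
apply/setP => [[i v]]; rewrite inE ffunE /=; apply/idP/eqP => [Hiv | ->]; last exact: Hg.
have /cards1P [x Hx] := tS i.
have h1 : (i, v) \in S :&: vclass m i by rewrite !inE Hiv eqxx.
have h2 : (i, g i) \in S :&: vclass m i by rewrite !inE Hg eqxx.
move: h1 h2; rewrite Hx !inE => /eqP h1 /eqP h2.
by have := congr1 snd (etrans h1 (esym h2)).
Qed.

Lemma card_binom2 (S : {set V}) : #|binom2 S| = 'C(#|S|, 2).
Proof. by rewrite /binom2 cards_draws. Qed.

Lemma binom2S (S S' : {set V}) : S \subset S' -> binom2 S \subset binom2 S'.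
Proof.
move=> sS; apply/subsetP => e; rewrite !inE => /andP [eS ->].
by rewrite (subset_trans eS sS).
Qed.

Lemma binom2U (S S' : {set V}) : binom2 S :|: binom2 S' \subset binom2 (S :|: S').
Proof. by rewrite subUset !binom2S ?subsetUl ?subsetUr. Qed.

Lemma binom2I (S S' : {set V}) : binom2 S :&: binom2 S' = binom2 (S :&: S').
Proof. by apply/setP => e; rewrite !inE subsetI andbACA andbb. Qed.

Lemma card_add_clique (A : {set {set V}}) (S U : {set V}) : A \subset binom2 U ->
  #|A| + 'C(#|S|, 2) <= #|A :|: binom2 S| + 'C(#|S :&: U|, 2).
Proof.
move=> AU; set B := binom2 S; set B' := binom2 (S :&: U).
have BB' : B' \subset B by apply: binom2S; apply: subsetIl.
have hB : #|B| = #|B'| + #|B :\: B'|.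
  by rewrite cardsD (setIidPr BB') subnKC // subset_leq_card.
have disj : A :&: (B :\: B') = set0.
  apply/setP => e; rewrite !inE; apply/negbTE/negP.
  move=> /and3P [eA /negP nB' /andP [eS e2]].
  have := subsetP AU e eA; rewrite inE => /andP [eU _].
  by apply: nB'; rewrite subsetI eS eU e2.
have h1 : #|A :|: (B :\: B')| <= #|A :|: B|.
  by apply/subset_leq_card/setUS/subsetDl.
have h2 := cardsU A (B :\: B'); rewrite disj cards0 subn0 in h2.
rewrite -!card_binom2; move: hB h1 h2; rewrite /B /B'; lia.
Qed.

Definition union4 (f1 f2 f3 f4 : FF) : {set {set V}} :=
  binom2 (vset f1) :|: binom2 (vset f2) :|: binom2 (vset f3) :|: binom2 (vset f4).

Definition overlap (f : FF) (U : {set V}) : nat := 'C(#|vset f :&: U|, 2).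

(* Adding the four cliques one at a time: each one brings 'C(k, 2) edges
   minus its overlap with the vertices already present. *)
Lemma card_union4 f1 f2 f3 f4 :
  4 * 'C(k, 2) <= #|union4 f1 f2 f3 f4| + overlap f2 (vset f1)
    + overlap f3 (vset f1 :|: vset f2) + overlap f4 (vset f1 :|: vset f2 :|: vset f3).
Proof.
have cB f : #|binom2 (vset f)| = 'C(k, 2) by rewrite card_binom2 card_vset.
have s1 := @card_add_clique (binom2 (vset f1)) (vset f2) (vset f1) (subxx _).
have s2 := @card_add_clique (binom2 (vset f1) :|: binom2 (vset f2)) (vset f3)
             (vset f1 :|: vset f2) (binom2U _ _).
have s3 := @card_add_clique (binom2 (vset f1) :|: binom2 (vset f2) :|: binom2 (vset f3))
             (vset f4) (vset f1 :|: vset f2 :|: vset f3)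
             (subset_trans (setSU _ (binom2U _ _)) (binom2U _ _)).
rewrite !card_vset !cB in s1 s2 s3.
rewrite /union4 /overlap; lia.
Qed.

Definition agree_on (I : {set 'I_k}) (t f : FF) : bool := [forall i in I, f i == t i].

(* Four cliques sharing two edges share three vertices, hence their
   functions agree on some set of three classes. *)
Lemma agree_of_common_edges f1 f2 f3 f4 :
  2 <= #|binom2 (vset f1 :&: vset f2 :&: vset f3 :&: vset f4)| ->
  exists2 I : {set 'I_k}, #|I| = 3 &
    [&& agree_on I f1 f2, agree_on I f1 f3 & agree_on I f1 f4].
Proof.
rewrite card_binom2; set S := _ :&: _ => hS.
pose I0 := [set i | [&& f2 i == f1 i, f3 i == f1 i & f4 i == f1 i]].
have SI0 : S \subset [set (i, f1 i) | i in I0].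
  apply/subsetP => [[i v]]; rewrite !inE /= => /andP[/andP[/andP[/eqP-> /eqP h2] /eqP h3] /eqP h4].
  by apply: imset_f; rewrite inE -h2 -h3 -h4 !eqxx.
have : 3 <= #|I0|.
  apply: leq_trans (leq_trans (subset_leq_card SI0) (leq_imset_card _ _)).
  by move: hS; rewrite bin2; case: #|S| => [|[|[|s]]].
case/subset_of_card => I II0 cI; exists I => //.
by apply/and3P; split; apply/forallP => i; apply/implyP => /(subsetP II0);
  rewrite inE => /and3P [].
Qed.
Lemma four_cliques (Q : {set {set {set V}}}) : Q \subset cliqueFam k m -> #|Q| = 4 ->
  exists f1 f2 f3 f4 : FF, \bigcup_(E in Q) E = union4 f1 f2 f3 f4 /\
    \bigcap_(E in Q) E \subset binom2 (vset f1 :&: vset f2 :&: vset f3 :&: vset f4).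
Proof.
move=> QF; rewrite cardE.
have clique_of E : E \in Q -> exists f : FF, E = binom2 (vset f).
  move=> /(subsetP QF) /imsetP [S]; rewrite inE => /transversal_vset [f ->] ->.
  by exists f.
have QE : Q = [set E | E \in enum Q] by apply/setP => E; rewrite inE mem_enum.
case: (enum Q) QE => [|E1 [|E2 [|E3 [|E4 [|E5 s]]]]] //= QenumE _.
have QE : Q = [set E1; E2; E3; E4] by rewrite QenumE; apply/setP => E; rewrite !inE !orbA.
have [f1 e1] := clique_of E1 ltac:(by rewrite QE !inE eqxx).
have [f2 e2] := clique_of E2 ltac:(by rewrite QE !inE eqxx ?orbT).
have [f3 e3] := clique_of E3 ltac:(by rewrite QE !inE eqxx ?orbT).
have [f4 e4] := clique_of E4 ltac:(by rewrite QE !inE eqxx ?orbT).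
exists f1, f2, f3, f4; rewrite QE e1 e2 e3 e4 !bigcup_setU !bigcap_setU !big_set1.
by rewrite !binom2I.
Qed.

Lemma cluster4_decomposition A : A \in cluster4 k m ->
  exists (I : {set 'I_k}) (f1 f2 f3 f4 : FF),
    [&& #|I| == 3, agree_on I f1 f2, agree_on I f1 f3 & agree_on I f1 f4]
    /\ A = union4 f1 f2 f3 f4.
Proof.
case/imsetP => Q; rewrite inE => /and3P [QF /eqP Q4 Q2] ->.
have [f1 [f2 [f3 [f4 [-> capQ]]]]] := four_cliques QF Q4.
have common2 : 2 <= #|binom2 (vset f1 :&: vset f2 :&: vset f3 :&: vset f4)|.
  by apply: leq_trans Q2 (leq_trans (subset_leq_card (subsetIl _ _)) (subset_leq_card capQ)).
have [I cI agreeI] := agree_of_common_edges common2.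
by exists I, f1, f2, f3, f4; rewrite cI eqxx.
Qed.

End TransversalCliques.

Section CountingCliques.
Variables k m : nat.
Local Notation V := (vtx k m).
Local Notation FF := {ffun 'I_k -> 'I_m}.

Definition trace (I : {set 'I_k}) (U : {set V}) (f : FF) : {set 'I_k} :=
  [set i | (i \notin I) && ((i, f i) \in U)].

Lemma prod_split (I J : {set 'I_k}) (a b : nat) : J \subset ~: I ->
  \prod_(i : 'I_k) (if i \in I then 1 else if i \in J then a else b)
    = a ^ #|J| * b ^ (#|~: I| - #|J|).
Proof.
move=> JI.
rewrite (bigID (fun i => i \in I)) /= big1 ?mul1n; last by move=> i ->.
rewrite (bigID (fun i => i \in J)) /=.
rewrite (eq_bigr (fun _ => a)); last by move=> i /andP [/negbTE -> ->].
rewrite [X in _ * X](eq_bigr (fun _ => b)); last by move=> i /andP [/negbTE -> /negbTE ->].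
rewrite (eq_bigl (fun i => i \in J)); last first.
  by move=> i; apply/andP/idP => [[] //|iJ]; split => //; move/(subsetP JI): iJ; rewrite inE.
rewrite [X in _ * X](eq_bigl (fun i => i \in ~: I :\: J)); last by move=> i; rewrite !inE andbC.
by rewrite !prod_nat_const cardsD (setIidPr JI).
Qed.

(* If every vertex of U in class i is one of g1 i, g2 i, g3 i, then at most
   3^|J| m^(k-3-|J|) functions agree with t on I and have trace J: they are
   fixed on I, have three choices on J and m choices elsewhere. *)
Lemma card_with_trace (I J : {set 'I_k}) (t g1 g2 g3 : FF) (U : {set V}) :
  (forall i v, (i, v) \in U -> v \in [set g1 i; g2 i; g3 i]) ->
  J \subset ~: I ->
  #|[set f : FF | agree_on I t f && (trace I U f == J)]|
    <= 3 ^ #|J| * m ^ (#|~: I| - #|J|).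
Proof.
move=> hU JI.
pose choices i := [set v : 'I_m | if i \in I then v == t i
                  else if i \in J then v \in [set g1 i; g2 i; g3 i] else true].
apply: (@leq_trans #|family (fun i => mem (choices i))|).
  apply: subset_leq_card; apply/subsetP => f; rewrite inE => /andP [/forallP ag /eqP eJ].
  apply/familyP => i; rewrite inE.
  case: ifP => iI; first by have := ag i; rewrite iI.
  case: ifP => // iJ; rewrite -eJ inE iI /= in iJ; exact: hU iJ.
rewrite card_family foldrE big_image /= -(prod_split 3 m JI).
apply: leq_prod => i _; have -> : #|mem (choices i)| = #|choices i| by apply: eq_card.
case: ifP => iI.
  apply: (@leq_trans #|[set t i]|); last by rewrite cards1.
  by apply: subset_leq_card; apply/subsetP => v; rewrite !inE iI.
case: ifP => iJ.
  apply: (@leq_trans #|[set g1 i; g2 i; g3 i]|).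
    by apply: subset_leq_card; apply/subsetP => v; rewrite !inE iI iJ.
  rewrite !cardsU !cards1; lia.
by apply: leq_trans (max_card _) _; rewrite card_ord.
Qed.

(* Grouping the functions f by their trace J: |vset f ∩ U| <= 3 + |J|, and
   card_with_trace counts each group. *)
Lemma overlap_sum_le (I : {set 'I_k}) (t g1 g2 g3 : FF) (U : {set V}) :
  #|I| = 3 -> (forall i v, (i, v) \in U -> v \in [set g1 i; g2 i; g3 i]) ->
  \sum_(f | agree_on I t f) 2 ^ overlap f U <=
  \sum_(j < #|~: I|.+1) 'C(#|~: I|, j) * (2 ^ 'C(3 + j, 2) * (3 ^ j * m ^ (#|~: I| - j))).
Proof.
move=> hI hU; set N := #|~: I|.
have overlap_trace f : #|vset f :&: U| <= 3 + #|trace I U f|.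
  apply: (@leq_trans #|[set (i, f i) | i in I :|: trace I U f]|).
    apply: subset_leq_card; apply/subsetP => [[i v]]; rewrite inE in_vset.
    move=> /andP [/eqP -> hiU]; apply: imset_f; rewrite !inE hiU.
    by case: (i \in I).
  by apply: (leq_trans (leq_imset_card _ _)); rewrite -hI cardsU leq_subr.
apply: (@leq_trans (\sum_(f | agree_on I t f) 2 ^ 'C(3 + #|trace I U f|, 2))).
  by apply: leq_sum => f _; rewrite leq_exp2l // leq_bin2l.
rewrite (partition_big (trace I U) (fun J => J \subset ~: I)) /=; last first.
  by move=> f _; apply/subsetP => i; rewrite !inE => /andP [-> _].
rewrite -(sum_over_subsets (~: I) (fun j => 2 ^ 'C(3 + j, 2) * (3 ^ j * m ^ (N - j)))).
apply: leq_sum => J JI.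
rewrite (eq_bigr (fun _ => 2 ^ 'C(3 + #|J|, 2))); last by move=> f /andP [_ /eqP ->].
rewrite sum_nat_cond_const mulnC leq_mul2l; apply/orP; right.
exact: (card_with_trace t hU JI).
Qed.

Definition nested_weight (I : {set 'I_k}) (f1 f2 f3 f4 : FF) : nat :=
  ([&& #|I| == 3, agree_on I f1 f2, agree_on I f1 f3 & agree_on I f1 f4] : nat) *
  2 ^ (overlap f2 (vset f1) + overlap f3 (vset f1 :|: vset f2)
       + overlap f4 (vset f1 :|: vset f2 :|: vset f3)).

Lemma sum_indicator (P : pred FF) (F : FF -> nat) :
  \sum_(f : FF) (P f : nat) * F f = \sum_(f | P f) F f.
Proof. by rewrite [RHS]big_mkcond; apply: eq_bigr => f _; case: (P f); rewrite ?mul1n. Qed.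

Definition overlap_budget (B : nat) : Prop :=
  forall (I : {set 'I_k}) (t g1 g2 g3 : FF) (U : {set V}),
  #|I| = 3 -> (forall i v, (i, v) \in U -> v \in [set g1 i; g2 i; g3 i]) ->
  \sum_(f | agree_on I t f) 2 ^ overlap f U <= B.

Variable B : nat.
Hypothesis budgetB : overlap_budget B.

(* Summing out f4, then f3, then f2, each sum is at most B. *)
Lemma nested_sum_fixed_base (I : {set 'I_k}) (f1 : FF) : #|I| = 3 ->
  \sum_(f2 : FF) \sum_(f3 : FF) \sum_(f4 : FF) nested_weight I f1 f2 f3 f4 <= B ^ 3.
Proof.
move=> hI.
pose a2 f2 := (agree_on I f1 f2 : nat) * 2 ^ overlap f2 (vset f1).
pose a3 f2 f3 := (agree_on I f1 f3 : nat) * 2 ^ overlap f3 (vset f1 :|: vset f2).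
pose a4 f2 f3 f4 := (agree_on I f1 f4 : nat) * 2 ^ overlap f4 (vset f1 :|: vset f2 :|: vset f3).
have weightE f2 f3 f4 : nested_weight I f1 f2 f3 f4 = a2 f2 * (a3 f2 f3 * a4 f2 f3 f4).
  rewrite /nested_weight /a2 /a3 /a4 hI eqxx /= !expnD.
  by case: (agree_on I f1 f2); case: (agree_on I f1 f3); case: (agree_on I f1 f4);
    rewrite /= ?mul1n ?mul0n ?muln0 ?mulnA.
have sum4 f2 f3 : \sum_(f4 : FF) a4 f2 f3 f4 <= B.
  rewrite /a4 sum_indicator; apply: (@budgetB I f1 f1 f2 f3) => // i v.
  by rewrite !inE /= => /orP [/orP [] |] ->; rewrite ?orbT.
have sum3 f2 : \sum_(f3 : FF) a3 f2 f3 <= B.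
  rewrite /a3 sum_indicator; apply: (@budgetB I f1 f1 f2 f2) => // i v.
  by rewrite !inE /= => /orP [] ->; rewrite ?orbT.
have sum2 : \sum_(f2 : FF) a2 f2 <= B.
  by rewrite /a2 sum_indicator; apply: (@budgetB I f1 f1 f1 f1) => // i v; rewrite !inE /= => ->.
have -> : \sum_(f2 : FF) \sum_(f3 : FF) \sum_(f4 : FF) nested_weight I f1 f2 f3 f4
    = \sum_(f2 : FF) a2 f2 * \sum_(f3 : FF) a3 f2 f3 * \sum_(f4 : FF) a4 f2 f3 f4.
  apply: eq_bigr => f2 _; rewrite big_distrr; apply: eq_bigr => f3 _.
  by rewrite !big_distrr; apply: eq_bigr => f4 _; rewrite weightE.
apply: (@leq_trans (\sum_(f2 : FF) a2 f2 * (B * B))).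
  apply: leq_sum => f2 _; rewrite leq_mul2l; apply/orP; right.
  apply: (@leq_trans (\sum_(f3 : FF) a3 f2 f3 * B)).
    by apply: leq_sum => f3 _; rewrite leq_mul2l sum4 orbT.
  by rewrite -big_distrl leq_mul2r sum3 orbT.
have -> : B ^ 3 = B * (B * B) by rewrite !expnS expn0 muln1.
by rewrite -big_distrl leq_mul2r sum2 orbT.
Qed.

(* Only 3-sets I contribute, 'C(k, 3) of them, and m^k choices of f1 each. *)
Lemma nested_sum_bound :
  \sum_(I : {set 'I_k}) \sum_(f1 : FF) \sum_(f2 : FF) \sum_(f3 : FF) \sum_(f4 : FF)
      nested_weight I f1 f2 f3 f4 <= 'C(k, 3) * (m ^ k * B ^ 3).
Proof.
rewrite (bigID (fun I : {set 'I_k} => #|I| == 3)) /= [X in _ + X]big1 ?addn0; last first.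
  move=> I /negbTE hI; apply: big1 => f1 _; apply: big1 => f2 _; apply: big1 => f3 _.
  by apply: big1 => f4 _; rewrite /nested_weight hI.
apply: (@leq_trans (\sum_(I : {set 'I_k} | #|I| == 3) (m ^ k * B ^ 3))).
  apply: leq_sum => I /eqP hI; apply: (@leq_trans (\sum_(f1 : FF) B ^ 3)).
    by apply: leq_sum => f1 _; apply: nested_sum_fixed_base.
  by rewrite sum_nat_const card_ffun !card_ord.
by rewrite sum_nat_cond_const card_draws card_ord.
Qed.

End CountingCliques.

Section RationalWeights.
Local Open Scope ring_scope.

Lemma sum_le_cover (R : numDomainType) (T1 T2 : finType) (D : {set T1}) (psi : T2 -> T1)
    (P : pred T2) (w : T1 -> R) (w' : T2 -> R) :
  (forall A, A \in D -> exists2 x, P x & psi x = A) ->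
  (forall x, P x -> w (psi x) <= w' x) -> (forall x, 0 <= w' x) ->
  \sum_(A in D) w A <= \sum_x w' x.
Proof.
move=> cov le_w w'_ge0.
apply: (@le_trans _ _ (\sum_(A in D) \sum_(x | (P x && (psi x \in D)) && (psi x == A)) w' x)).
  apply: ler_sum => A AD; have [x Px xA] := cov A AD.
  rewrite (bigD1 x) /=; last by rewrite Px xA AD eqxx.
  by rewrite -xA -[w _]addr0 lerD ?le_w // sumr_ge0.
rewrite -(partition_big psi (mem D)) //=; last by move=> x /andP [].
by rewrite [X in _ <= X](bigID (fun x => P x && (psi x \in D))) /= lerDl sumr_ge0.
Qed.

Lemma exp2_neg_le (a b c : nat) : (b <= a + c)%N ->
  (2%:Q) ^- a <= (2 ^ c)%:R / (2 ^ b)%:R.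
Proof.
move=> hbac; have pos n : (0 : rat) < (2 ^ n)%:R by rewrite ltr0n expn_gt0.
rewrite (_ : 2%:Q = 2%:R) // -natrX ler_pdivlMr // mulrC ler_pdivrMr //.
by rewrite -natrM ler_nat -expnD leq_exp2l // addnC.
Qed.

End RationalWeights.

Section ClusterWeight.
Variables k m B : nat.
Hypothesis budgetB : overlap_budget k m B.
Local Notation FF := {ffun 'I_k -> 'I_m}.
Local Open Scope ring_scope.

(* Each 4-cluster is covered by a tuple (I, f1, f2, f3, f4) whose nested
   weight, divided by 2^(4 'C(k, 2)), dominates its own weight. *)
Lemma Tweight_cluster4_le :
  Tweight (cluster4 k m) <= ('C(k, 3) * (m ^ k * B ^ 3))%:R / (2 ^ (4 * 'C(k, 2)))%:R.
Proof.
pose D2 : rat := (2 ^ (4 * 'C(k, 2)))%:R.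
have D2_gt0 : 0 < D2 by rewrite ltr0n expn_gt0.
pose agreeing (x : {set 'I_k} * FF * FF * FF * FF) :=
  let: (J, f1, f2, f3, f4) := x in
  [&& #|J| == 3, agree_on J f1 f2, agree_on J f1 f3 & agree_on J f1 f4].
have cover := @sum_le_cover _ _ _ (cluster4 k m)
  (fun x => let: (_, f1, f2, f3, f4) := x in union4 f1 f2 f3 f4) agreeing
  (fun A => (2%:Q) ^- #|A|)
  (fun x => (nested_weight x.1.1.1.1 x.1.1.1.2 x.1.1.2 x.1.2 x.2)%:R / D2).
rewrite /Tweight; apply: le_trans (cover _ _ _) _.
- move=> A /cluster4_decomposition [I [f1 [f2 [f3 [f4 [agr ->]]]]]].
  by exists (I, f1, f2, f3, f4).
- move=> [[[[I f1] f2] f3] f4] /= agr; rewrite /nested_weight agr mul1n.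
  by apply: exp2_neg_le; rewrite !addnA; apply: card_union4.
- by move=> [[[[I f1] f2] f3] f4]; rewrite divr_ge0 ?ler0n ?ltW.
rewrite -mulr_suml ler_pM2r ?invr_gt0 // -natr_sum ler_nat.
apply: leq_trans (nested_sum_bound budgetB); rewrite !pair_bigA; exact: leqnn.
Qed.

End ClusterWeight.

Lemma odd_parameters k : 43 <= k -> odd k ->
  exists p, [/\ k = p.*2 + 3, 20 <= p & (k + 9)./2 = p + 6].
Proof.
move=> hk ko; have kE := odd_double_half k; rewrite ko in kE.
exists (k./2).-1; have kp : k = (k./2).-1.*2 + 3 by move: kE; rewrite -!mul2n; lia.
split=> //; first by move: kE; rewrite -mul2n; lia.
by rewrite {1}kp -addnA -(doubleD _ 6) doubleK.
Qed.

Lemma overlap_budget_explicit p k m : 20 <= p -> k = p.*2 + 3 -> m = 2 ^ (p + 6) ->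
  overlap_budget k m (16 * m ^ (k - 3)).
Proof.
move=> hp kE mE I t g1 g2 g3 U hI hU.
apply: leq_trans (@overlap_sum_le k m I t g1 g2 g3 U hI hU) _.
have -> : #|~: I| = p.*2 by have := cardsC I; rewrite card_ord hI; lia.
by rewrite kE addnK mE; apply: inner_series_bound.
Qed.

Lemma nested_count_lt k m : 3 < k -> 0 < m ->
  'C(k, 3) * (m ^ k * (16 * m ^ (k - 3)) ^ 3) < k ^ 3 * ('C(k, 3) * m ^ (4 * k - 9) * 2 ^ 9).
Proof.
move=> hk hm.
have -> : m ^ k * (16 * m ^ (k - 3)) ^ 3 = 8 * (m ^ (4 * k - 9) * 2 ^ 9).
  rewrite expnMn -expnM mulnCA -expnD (_ : k + (k - 3) * 3 = 4 * k - 9); last lia.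
  by rewrite (_ : 16 ^ 3 = 8 * 2 ^ 9) // -mulnA (mulnC (2 ^ 9)).
have hC : 0 < 'C(k, 3) by rewrite bin_gt0; lia.
have hM : 0 < m ^ (4 * k - 9) * 2 ^ 9 by rewrite muln_gt0 !expn_gt0 hm.
have hk3 : 8 < k ^ 3 by apply: (@leq_trans (4 ^ 3)) => //; apply: leq_expn2r; lia.
by rewrite mulnCA -(mulnA 'C(k, 3)) ltn_pmul2r // muln_gt0 hC.
Qed.

Lemma cube_fnk k m : 3 <= k -> 0 < m ->
  (k%:R ^+ 3 * fnk (k * m) k
    = (k ^ 3 * ('C(k, 3) * m ^ (4 * k - 9) * 2 ^ 9))%:R / (2 ^ (4 * 'C(k, 2)))%:R :> rat)%R.
Proof.
move=> k3 m0; rewrite /fnk.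
have k0 : (k%:R != 0 :> rat)%R by rewrite pnatr_eq0; lia.
have -> : ((k * m)%:R / k%:R = m%:R :> rat)%R by rewrite natrM mulrC mulKf.
have -> : ((4 * k)%:Z - 9 = (4 * k - 9)%N :> int)%R by rewrite subzn //; lia.
rewrite -exprnP expfzDr ?pnatr_eq0 // -exprnN -exprnP (_ : 2%:Q = 2%:R :> rat)%R //.
by rewrite !natrM !natrX; ring.
Qed.

Theorem mainTheorem4 :
  exists K : nat, forall k : nat, K <= k -> odd k ->
    let m := 2 ^ ((k + 9)./2) in
    let n := k * m in
    (Tweight (cluster4 k m) < (k%:R) ^+ 3 * fnk n k)%R.
Proof.
exists 43 => k hk ko; cbv zeta.
have [p [kE hp halfE]] := odd_parameters hk ko.
set m := 2 ^ _; have mE : m = 2 ^ (p + 6) by rewrite /m halfE.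
have m_gt0 : 0 < m by rewrite expn_gt0.
have budget := overlap_budget_explicit hp kE mE.
rewrite cube_fnk //; last lia.
apply: (le_lt_trans (Tweight_cluster4_le budget)).
by rewrite ltr_pM2r ?invr_gt0 ?ltr0n ?expn_gt0 // ltr_nat nested_count_lt //; lia.
Qed.
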